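(* Let $(M,\bullet)$ be a monoid with unit $e$. Then ${\sf T}M$, equipped with the partial compositions $\circ_i$ and the right actions of the symmetric groups described in the context, is a symmetric set-operad (with unit $(e)\in{\sf T}M(1)$). Moreover, the assignment $M\mapsto {\sf T}M$, $\theta\mapsto{\sf T}\theta$ is a functor from the category of monoids (with monoid morphisms) to the category of set-operads (with set-operad morphisms). Furthermore, ${\sf T}$ preserves injections and surjections: if $\theta:M\to N$ is an injective (resp. surjective) monoid morphism, then ${\sf T}\theta$ is injective (resp. surjective).
   Context: For a monoid $(M,\bullet)$, let ${\sf T}M:=\biguplus_{n\geq 1}{\sf T}M(n)$ where ${\sf T}M(n):=M^n$ is the set of words $(x_1,\dots,x_n)$ of length $n$ over the alphabet $M$ (elements of arity $n$). For $x\in{\sf T}M(n)$, $y\in{\sf T}M(m)$ and $1\leq i\leq n$, define $x\circ_i y:=(x_1,\dots,x_{i-1},x_i\bullet y_1,\dots,x_i\bullet y_m,x_{i+1},\dots,x_n)\in{\sf T}M(n+m-1)$. For $x\in{\sf T}M(n)$ and $\sigma\in\mathfrak{S}_n$, define $x\cdot\sigma:=(x_{\sigma(1)},\dots,x_{\sigma(n)})$. For a monoid morphism $\theta:M\to N$, define ${\sf T}\theta:{\sf T}M\to{\sf T}N$ by ${\sf T}\theta(x_1,\dots,x_n):=(\theta(x_1),\dots,\theta(x_n))$. *)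

From mathcomp Require Import all_boot fingroup perm.

Set Implicit Arguments.
Unset Strict Implicit.
Unset Printing Implicit Defensive.

Record monoid := MkMonoid {
  mcar :> Type;
  mop : mcar -> mcar -> mcar;
  munit : mcar;
  _ : forall x y z, mop x (mop y z) = mop (mop x y) z;
  _ : forall x, mop munit x = x;
  _ : forall x, mop x munit = x
}.
Arguments mop {m}.
Arguments munit {m}.

Definition monoid_morph (M N : monoid) (f : M -> N) : Prop :=
  (forall x y : M, f (mop x y) = mop (f x) (f y)) /\ f munit = munit.

(* permn s k = s(k) for 1 <= k <= n (1-based), k otherwise. *)
Definition permn (n : nat) (s : 'S_n) (k : nat) : nat :=
  match @insub nat (fun j => j < n) _ k.-1 with
  | Some j => (s j).+1
  | None => k
  end.

(* The partial composition s o_i t of the symmetric (permutation) operad,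
   s in S_n, t in S_m, as a map on 1-based indices {1,...,n+m-1}:
   the value s(i) is blown up into the block s(i), ..., s(i)+m-1
   permuted by t, and the other values are shifted accordingly. *)
Definition pcompn (n m : nat) (s : 'S_n) (t : 'S_m) (i k : nat) : nat :=
  let si := permn s i in
  let sh j := if j < si then j else j + m - 1 in
  if k < i then sh (permn s k)
  else if k < i + m then si + permn t (k - i + 1) - 1
  else sh (permn s (k - m + 1)).

(* Symmetric set-operads, presented as graded sets: a carrier X with    *)
(* an arity map ar; the component of arity n (n >= 1) is               *)
(* {x : X | ar x = n}.  Elements of arity 0 are not part of the operad *)
(* (all axioms only speak about elements of arity >= 1).               *)
(*   comp x y i   : the partial composition x o_i y (1 <= i <= ar x)   *)
(*   act n x s    : the right action x . s of s in S_n (ar x = n)      *)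
Definition is_sym_set_operad (X : Type) (ar : X -> nat) (one : X)
    (comp : X -> X -> nat -> X) (act : forall n, X -> 'S_n -> X) : Prop :=
      ar one = 1 /\
      (forall x y i, 0 < ar x -> 0 < ar y -> 0 < i <= ar x ->
         ar (comp x y i) = ar x + ar y - 1) /\
      (forall n x (s : 'S_n), ar x = n -> 0 < n -> ar (act n x s) = n) /\
      (forall x, 0 < ar x -> comp one x 1 = x) /\
      (forall x i, 0 < i <= ar x -> comp x one i = x) /\
      (forall x y z i j, 0 < ar x -> 0 < ar y -> 0 < ar z ->
         0 < i <= ar x -> 0 < j <= ar y ->
         comp (comp x y i) z (i + j - 1) = comp x (comp y z j) i) /\
      (forall x y z i j, 0 < ar x -> 0 < ar y -> 0 < ar z ->
         0 < i -> i < j -> j <= ar x ->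
         comp (comp x y i) z (j + ar y - 1) = comp (comp x z j) y i) /\
      (* right action of the symmetric groups: x.id = x, (x.s).t = x.(s o t),
         where (s o t)(k) = s(t(k)), i.e. the mathcomp product t * s *)
      (forall n x, ar x = n -> 0 < n -> act n x 1%g = x) /\
      (forall n x (s t : 'S_n), ar x = n -> 0 < n ->
         act n (act n x s) t = act n x (t * s)%g) /\
      (forall n m x y (s : 'S_n) (t : 'S_m) i, ar x = n -> ar y = m ->
         0 < n -> 0 < m -> 0 < i <= n ->
         forall r : 'S_(n + m - 1),
           (forall k : 'I_(n + m - 1), (r k).+1 = pcompn s t i k.+1) ->
           comp (act n x s) (act m y t) i
           = act (n + m - 1) (comp x y (permn s i)) r).

Definition sym_set_operad_morph
    (X : Type) (arX : X -> nat) (oneX : X)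
    (compX : X -> X -> nat -> X) (actX : forall n, X -> 'S_n -> X)
    (Y : Type) (arY : Y -> nat) (oneY : Y)
    (compY : Y -> Y -> nat -> Y) (actY : forall n, Y -> 'S_n -> Y)
    (f : X -> Y) : Prop :=
  [/\ (forall x, 0 < arX x -> arY (f x) = arX x),
      f oneX = oneY,
      (forall x y i, 0 < arX x -> 0 < arX y -> 0 < i <= arX x ->
         f (compX x y i) = compY (f x) (f y) i) &
      (forall n x (s : 'S_n), arX x = n -> 0 < n ->
         f (actX n x s) = actY n (f x) s)].

(* T M = words over M (seq M, arity = length; only nonempty words,     *)
(* i.e. arity >= 1, belong to T M).                                    *)
Section T.
Variable M : monoid.

Definition T_ar (x : seq M) : nat := size x.

Definition T_one : seq M := [:: (munit : M)].

(* x o_i y = (x_1,...,x_{i-1}, x_i y_1, ..., x_i y_m, x_{i+1}, ..., x_n) *)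
Definition T_comp (x y : seq M) (i : nat) : seq M :=
  take i.-1 x ++ map (mop (nth munit x i.-1)) y ++ drop i x.

Definition T_act (n : nat) (x : seq M) (s : 'S_n) : seq M :=
  [seq nth munit x (s j) | j <- enum 'I_n].

End T.

Definition T_map (M N : monoid) (theta : M -> N) : seq M -> seq N :=
  map theta.

(* Every axiom of a symmetric operad for T M is an identity between words, so it
   is checked letter by letter: partial composition splices a block of letters
   prefixed by x_i, the action reindexes letters, and the only algebraic input is
   associativity and unitality of M, used inside the spliced blocks. The functor
   T acts letterwise through map, which commutes with both operations as soon as
   theta is a monoid morphism; injectivity and surjectivity transfer letterwise. *)
From mathcomp Require Import all_boot fingroup perm zify.

Set Implicit Arguments.
Unset Strict Implicit.
Unset Printing Implicit Defensive.

Section MonoidLaws.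
Variable M : monoid.

Lemma mopA (x y z : M) : mop x (mop y z) = mop (mop x y) z.
Proof. by case: M x y z. Qed.

Lemma mop1x (x : M) : mop munit x = x.
Proof. by case: M x. Qed.

Lemma mopx1 (x : M) : mop x munit = x.
Proof. by case: M x. Qed.

End MonoidLaws.

Lemma permnE n (s : 'S_n) k (lt_kn : k < n) : permn s k.+1 = (s (Ordinal lt_kn)).+1.
Proof. by rewrite /permn /= insubT /=; congr (s _).+1; apply: val_inj. Qed.

Lemma permn_gt0 n (s : 'S_n) k : k < n -> 0 < permn s k.+1.
Proof. by move=> lt_kn; rewrite (permnE _ lt_kn). Qed.

Lemma permn_le n (s : 'S_n) k : k < n -> permn s k.+1 <= n.
Proof. by move=> lt_kn; rewrite (permnE _ lt_kn) /=. Qed.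

Lemma permn_inj n (s : 'S_n) k l : k < n -> l < n ->
  permn s k.+1 = permn s l.+1 -> k = l.
Proof.
by move=> lt_kn lt_ln; rewrite (permnE _ lt_kn) (permnE _ lt_ln) => -[/val_inj/perm_inj[]].
Qed.

Section Words.
Variable M : monoid.
Implicit Types x y z : seq M.

Lemma size_T_comp x y i : 0 < i <= size x ->
  size (T_comp x y i) = size x + size y - 1.
Proof.
move=> /andP[i_gt0 i_le]; rewrite /T_comp !size_cat size_take size_map size_drop.
by case: ifP; lia.
Qed.

Lemma nth_T_comp x y i k : 0 < i <= size x ->
  nth munit (T_comp x y i) k =
  if k < i.-1 then nth munit x k
  else if k < i.-1 + size y then mop (nth munit x i.-1) (nth munit y (k - i.-1))
  else nth munit x (k - size y + 1).
Proof.
move=> /andP[i_gt0 i_le]; rewrite /T_comp nth_cat size_take.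
have -> : (if i.-1 < size x then i.-1 else size x) = i.-1 by case: ifP; lia.
case: ifP => k_lt; first by rewrite nth_take.
rewrite nth_cat size_map; case: ifP => k_lt'.
  by rewrite ifT ?(nth_map munit) //; lia.
by rewrite ifF ?nth_drop; [congr nth; lia | lia].
Qed.

(* 1-based position p of x, other than the spliced one a, as a position of x o_a y. *)
Lemma nth_T_comp_shift x y a p : 0 < a <= size x -> 0 < p -> p != a ->
  nth munit (T_comp x y a) (if p < a then p else p + size y - 1).-1 = nth munit x p.-1.
Proof.
move=> a_bd p_gt0 p_neq; rewrite nth_T_comp //.
case: (ltnP p a) => p_a; first by rewrite ifT //; lia.
by rewrite ifF ?ifF; [congr nth | ..]; lia.
Qed.

Lemma nth_T_comp_block x y a q : 0 < a <= size x -> 0 < q <= size y ->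
  nth munit (T_comp x y a) (a + q - 1).-1 = mop (nth munit x a.-1) (nth munit y q.-1).
Proof.
move=> a_bd q_bd; rewrite nth_T_comp // ifF ?ifT; try lia.
by congr (mop _ (nth _ _ _)); lia.
Qed.

Lemma size_T_act n x (s : 'S_n) : size (T_act x s) = n.
Proof. by rewrite /T_act size_map size_enum_ord. Qed.

Lemma nth_T_act n x (s : 'S_n) k (lt_kn : k < n) :
  nth munit (T_act x s) k = nth munit x (s (Ordinal lt_kn)).
Proof.
rewrite /T_act (nth_map (Ordinal lt_kn)) ?size_enum_ord //.
by rewrite (nth_ord_enum (Ordinal lt_kn) (Ordinal lt_kn)).
Qed.

Lemma nth_T_act_permn n x (s : 'S_n) k : k < n ->
  nth munit (T_act x s) k = nth munit x (permn s k.+1).-1.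
Proof. by move=> lt_kn; rewrite (nth_T_act _ _ lt_kn) (permnE _ lt_kn). Qed.

Lemma T_comp1x x : T_comp (T_one M) x 1 = x.
Proof.
by rewrite /T_comp /= cats0 -[RHS]map_id; apply: eq_map => a; apply: mop1x.
Qed.

Lemma T_compx1 x i : 0 < i <= size x -> T_comp x (T_one M) i = x.
Proof.
move=> /andP[i_gt0 i_le]; rewrite /T_comp /= mopx1.
rewrite -[RHS](cat_take_drop i.-1) [drop i.-1 x](drop_nth munit) ?prednK //; lia.
Qed.

Lemma T_comp_seq_assoc x y z i j : 0 < i <= size x -> 0 < j <= size y ->
  T_comp (T_comp x y i) z (i + j - 1) = T_comp x (T_comp y z j) i.
Proof.
move=> i_bd j_bd.
have ij_bd : 0 < i + j - 1 <= size (T_comp x y i) by rewrite size_T_comp //; lia.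
apply: (@eq_from_nth _ munit) => [|k _]; first by rewrite !size_T_comp //; lia.
rewrite (nth_T_comp _ _ ij_bd) !(nth_T_comp _ _ i_bd) !(nth_T_comp _ _ j_bd) size_T_comp //.
by do ![case: ifP => ?]; rewrite ?mopA; repeat (f_equal; try lia); lia.
Qed.

Lemma T_comp_par_assoc x y z i j : 0 < i -> i < j -> j <= size x ->
  T_comp (T_comp x y i) z (j + size y - 1) = T_comp (T_comp x z j) y i.
Proof.
move=> i_gt0 lt_ij j_le.
have i_bd : 0 < i <= size x by lia.
have j_bd : 0 < j <= size x by lia.
have j'_bd : 0 < j + size y - 1 <= size (T_comp x y i) by rewrite size_T_comp //; lia.
have i'_bd : 0 < i <= size (T_comp x z j) by rewrite size_T_comp //; lia.
apply: (@eq_from_nth _ munit) => [|k _]; first by rewrite !size_T_comp //; lia.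
rewrite (nth_T_comp _ _ j'_bd) (nth_T_comp _ _ i'_bd) !(nth_T_comp _ _ i_bd).
rewrite !(nth_T_comp _ _ j_bd).
by do ![case: ifP => ?]; repeat (f_equal; try lia); lia.
Qed.

Lemma T_act1 n x : size x = n -> T_act x (1%g : 'S_n) = x.
Proof.
move=> size_x; apply: (@eq_from_nth _ munit) => [|k]; rewrite size_T_act //.
by move=> lt_kn; rewrite (nth_T_act _ _ lt_kn) perm1.
Qed.

Lemma T_actM n x (s t : 'S_n) : T_act (T_act x s) t = T_act x (t * s)%g.
Proof.
apply: (@eq_from_nth _ munit) => [|k]; rewrite !size_T_act // => lt_kn.
rewrite !(nth_T_act _ _ lt_kn) (nth_T_act _ _ (ltn_ord _)) permM.
by do 3 f_equal; apply: val_inj.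
Qed.

Lemma T_comp_act n m x y (s : 'S_n) (t : 'S_m) i (r : 'S_(n + m - 1)) :
  size x = n -> size y = m -> 0 < m -> 0 < i <= n ->
  (forall k : 'I_(n + m - 1), (r k).+1 = pcompn s t i k.+1) ->
  T_comp (T_act x s) (T_act y t) i = T_act (T_comp x y (permn s i)) r.
Proof.
move=> size_x size_y m_gt0 /andP[i_gt0 i_le] def_r; set a := permn s i.
have lt_in : i.-1 < n by lia.
have def_a : a = permn s i.-1.+1 by rewrite prednK.
have a_bd : 0 < a <= size x by rewrite size_x def_a permn_gt0 ?permn_le.
have i_bd : 0 < i <= size (T_act x s) by rewrite size_T_act i_gt0.
apply: (@eq_from_nth _ munit) => [|k]; rewrite size_T_comp // !size_T_act //.
move=> lt_k; rewrite (nth_T_act _ _ lt_k) -[val _]succnK def_r /pcompn -/a /=.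
rewrite (nth_T_comp _ _ i_bd) size_T_act.
have permn_neq_a l : l < n -> l.+1 != i -> permn s l.+1 != a.
  by move=> lt_ln; apply: contra => /eqP; rewrite def_a => /(permn_inj lt_ln lt_in); lia.
(* The position k lies before, inside or after the block spliced in at i. *)
case: ifP => [k_lt | k_ge]; last case: ifP => [k_lt' | k_ge'].
- rewrite ifT; last by lia.
  rewrite nth_T_act_permn; last by lia.
  by rewrite -size_y nth_T_comp_shift // ?permn_gt0 ?permn_neq_a //; lia.
- rewrite ifF; last by lia.
  rewrite ifT; last by lia.
  have -> : k.+1 - i + 1 = (k - i.-1).+1 by lia.
  rewrite !nth_T_act_permn -?def_a; try lia.
  by rewrite nth_T_comp_block // size_y permn_gt0 ?permn_le //; lia.
- rewrite ifF; last by lia.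
  rewrite ifF; last by lia.
  have -> : k.+1 - m + 1 = (k - m + 1).+1 by lia.
  rewrite nth_T_act_permn; last by lia.
  by rewrite -size_y nth_T_comp_shift // ?permn_gt0 ?permn_neq_a //; lia.
Qed.

Lemma T_is_sym_set_operad : is_sym_set_operad (@T_ar M) (T_one M) (@T_comp M) (@T_act M).
Proof.
rewrite /is_sym_set_operad /T_ar; split=> //.
split; first by move=> x y i _ _; apply: size_T_comp.
split; first by move=> n x s _ _; apply: size_T_act.
split; first by move=> x _; apply: T_comp1x.
split; first by move=> x i; apply: T_compx1.
split; first by move=> x y z i j _ _ _; apply: T_comp_seq_assoc.
split; first by move=> x y z i j _ _ _; apply: T_comp_par_assoc.
split; first by move=> n x size_x _; apply: T_act1.
split; first by move=> n x s t _ _; apply: T_actM.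
by move=> n m x y s t i size_x size_y _ m_gt0 i_bd r; apply: T_comp_act.
Qed.

End Words.

Lemma T_map_morph (M N : monoid) (theta : M -> N) : monoid_morph theta ->
  sym_set_operad_morph (@T_ar M) (T_one M) (@T_comp M) (@T_act M)
                       (@T_ar N) (T_one N) (@T_comp N) (@T_act N) (T_map theta).
Proof.
rewrite /T_ar /T_map => -[thetaM theta1]; split.
- by move=> x _; rewrite size_map.
- by rewrite /T_one /= theta1.
- move=> x y i _ _ i_bd; rewrite /T_comp !map_cat map_take map_drop -!map_comp.
  rewrite (nth_map munit); last by lia.
  by congr (_ ++ _ ++ _); apply: eq_map => b /=; apply: thetaM.
- move=> n x s size_x _; rewrite /T_act -map_comp; apply: eq_map => j /=.
  by rewrite (nth_map munit) // size_x.
Qed.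

Lemma map_surj (A B : Type) (f : A -> B) :
  (forall b, exists a, f a = b) -> forall s : seq B, exists r, map f r = s.
Proof.
move=> f_surj; elim=> [|b s [r <-]]; first by exists [::].
by have [a <-] := f_surj b; exists (a :: r).
Qed.

Theorem mainTheorem1 :
  (* T M is a symmetric set-operad with unit (e) *)
  (forall M : monoid,
     is_sym_set_operad (@T_ar M) (T_one M) (@T_comp M) (@T_act M)) /\
  (* T theta is a morphism of set-operads *)
  (forall (M N : monoid) (theta : M -> N), monoid_morph theta ->
     sym_set_operad_morph (@T_ar M) (T_one M) (@T_comp M) (@T_act M)
                          (@T_ar N) (T_one N) (@T_comp N) (@T_act N)
                          (T_map theta)) /\
  (* functoriality: T id = id and T (phi o theta) = T phi o T theta *)
  (forall (M : monoid) (x : seq M), 0 < size x -> T_map (fun a : M => a) x = x) /\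
  (forall (M N P : monoid) (theta : M -> N) (phi : N -> P),
     monoid_morph theta -> monoid_morph phi ->
     forall x : seq M, 0 < size x ->
       T_map (fun a => phi (theta a)) x = T_map phi (T_map theta x)) /\
  (* T preserves injections *)
  (forall (M N : monoid) (theta : M -> N), monoid_morph theta -> injective theta ->
     forall x y : seq M, 0 < size x -> 0 < size y ->
       T_map theta x = T_map theta y -> x = y) /\
  (* T preserves surjections *)
  (forall (M N : monoid) (theta : M -> N), monoid_morph theta ->
     (forall b : N, exists a : M, theta a = b) ->
     forall y : seq N, 0 < size y ->
       exists x : seq M, 0 < size x /\ T_map theta x = y).
Proof.
split; first exact: T_is_sym_set_operad.
split; first exact: T_map_morph.
split; first by move=> M x _; apply: map_id.
split; first by move=> M N P theta phi _ _ x _; apply: map_comp.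
split; first by move=> M N theta _ theta_inj x y _ _; apply: inj_map.
move=> M N theta _ theta_surj y y_gt0; have [x def_y] := map_surj theta_surj y.
by exists x; rewrite -def_y size_map in y_gt0.
Qed.
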